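(* Let $G=(V,E)$ be a finite undirected graph, and for $i\in V$ let $N(i)$ denote its set of neighbours. Fix $d\ge 1$. For each node $i\in V$ let $\mathbf{S}_i,\mathbf{T}_i\in\mathbb{R}^{d\times d}$ (the source and target maps of $i$), each of the form $c\,Q$ with $c\ge 0$ a scalar and $Q$ an orthogonal matrix. For a $0$-cochain $\mathbf{X}=(\mathbf{x}_i)_{i\in V}$, $\mathbf{x}_i\in\mathbb{R}^d$, define $$L^{\mathrm{out}}(\mathbf{X})_i=\sum_{j\in N(i)}\big(\mathbf{S}_i^{\top}\mathbf{S}_i\mathbf{x}_i-\mathbf{T}_i^{\top}\mathbf{S}_j\mathbf{x}_j\big),\qquad ((L^{\mathrm{in}})^{\top}\mathbf{X})_i=\sum_{j\in N(i)}\big(\mathbf{T}_i^{\top}\mathbf{T}_i\mathbf{x}_i-\mathbf{T}_i^{\top}\mathbf{S}_j\mathbf{x}_j\big).$$ Let $i\in V$. (1) If $\mathbf{T}_i=0$, then $\big((L^{\mathrm{in}})^{\top}L^{\mathrm{out}}(\mathbf{X})\big)_i=0$ for every $\mathbf{X}$. (2) If $k\in N(i)$ satisfies $\mathbf{S}_k=0$, then $\big((L^{\mathrm{in}})^{\top}L^{\mathrm{out}}(\mathbf{X})\big)_i$ does not depend on $\mathbf{x}_k$.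
   Context: $L^{\mathrm{out}}$ and $(L^{\mathrm{in}})^{\top}$ are the out-degree sheaf Laplacian and the transpose of the in-degree sheaf Laplacian of a cellular sheaf on the directed graph obtained by replacing each undirected edge $\{i,j\}$ by both directed edges $ij$ and $ji$, where every node $i$ uses the same restriction map $\mathbf{S}_i$ on edges leaving $i$ and $\mathbf{T}_i$ on edges entering $i$. The composition $(L^{\mathrm{in}})^{\top}L^{\mathrm{out}}$ means applying $L^{\mathrm{out}}$ first. *)

From mathcomp Require Import all_boot all_order all_algebra.
From mathcomp Require Import reals.
Set Implicit Arguments. Unset Strict Implicit. Unset Printing Implicit Defensive.
Import Order.TTheory GRing.Theory Num.Theory.
Local Open Scope ring_scope.

Definition orthogonal_mx (R : realType) (d : nat) (Q : 'M[R]_d) : Prop :=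
  Q *m Q^T = 1%:M.

Definition scaled_orthogonal (R : realType) (d : nat) (A : 'M[R]_d) : Prop :=
  exists (c : R) (Q : 'M[R]_d), 0 <= c /\ orthogonal_mx Q /\ A = c *: Q.

Definition Lout (R : realType) (V : finType) (e : rel V) (d : nat)
  (S T : V -> 'M[R]_d) (X : V -> 'cV[R]_d) : V -> 'cV[R]_d :=
  fun i => \sum_(j in [set j | e i j])
             ((S i)^T *m S i *m X i - (T i)^T *m S j *m X j).

Definition LinT (R : realType) (V : finType) (e : rel V) (d : nat)
  (S T : V -> 'M[R]_d) (X : V -> 'cV[R]_d) : V -> 'cV[R]_d :=
  fun i => \sum_(j in [set j | e i j])
             ((T i)^T *m T i *m X i - (T i)^T *m S j *m X j).

From mathcomp Require Import all_boot all_order all_algebra.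
From mathcomp Require Import reals.
Import Order.TTheory GRing.Theory Num.Theory.
Local Open Scope ring_scope.

(* Both Laplacians see a neighbour [j] only through [S j *m x_j].  Hence
   [(L^in)^T Y] vanishes at [i] when [T i = 0]; and if [S k = 0], changing
   [x_k] changes neither any [S l *m x_l] nor [L^out X] away from [k], while the
   value of [L^out X] at [k] enters [(L^in)^T] only through [S k = 0]. *)

Section SheafLaplacians.

Variables (R : realType) (V : finType) (e : rel V) (d : nat).
Variables (S T : V -> 'M[R]_d).

Lemma LinT_eq0 (Y : V -> 'cV[R]_d) (i : V) : T i = 0 -> LinT e S T Y i = 0.
Proof.
move=> Ti0; rewrite /LinT big1 // => j _.
by rewrite Ti0 trmx0 !mul0mx subrr.
Qed.

Lemma Lout_congr (X Y : V -> 'cV[R]_d) (i : V) :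
  (forall l, S l *m X l = S l *m Y l) -> X i = Y i ->
  Lout e S T X i = Lout e S T Y i.
Proof.
move=> eqSXY eqXYi; rewrite /Lout; apply: eq_bigr => j _.
by rewrite eqXYi -!mulmxA eqSXY.
Qed.

Lemma LinT_congr (X Y : V -> 'cV[R]_d) (i : V) :
  (forall l, S l *m X l = S l *m Y l) -> X i = Y i ->
  LinT e S T X i = LinT e S T Y i.
Proof.
move=> eqSXY eqXYi; rewrite /LinT; apply: eq_bigr => j _.
by rewrite eqXYi -!mulmxA eqSXY.
Qed.

Lemma mulmx_eq_off_kernel (X Y : V -> 'cV[R]_d) (k : V) :
  S k = 0 -> (forall j, j != k -> X j = Y j) ->
  forall l, S l *m X l = S l *m Y l.
Proof.
move=> Sk0 eqXY l; have [->|neq_lk] := eqVneq l k; first by rewrite Sk0 !mul0mx.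
by rewrite eqXY.
Qed.

Lemma Lout_eq_off_kernel (X Y : V -> 'cV[R]_d) (k : V) :
  S k = 0 -> (forall j, j != k -> X j = Y j) ->
  forall j, j != k -> Lout e S T X j = Lout e S T Y j.
Proof.
move=> Sk0 eqXY j neq_jk; apply: Lout_congr (eqXY j neq_jk).
exact: mulmx_eq_off_kernel Sk0 eqXY.
Qed.

End SheafLaplacians.

Theorem proposition1 (R : realType) (V : finType) (e : rel V)
  (e_sym : symmetric e) (e_irr : irreflexive e)
  (d : nat) (hd : (0 < d)%N)
  (S T : V -> 'M[R]_d)
  (hS : forall v, scaled_orthogonal (S v))
  (hT : forall v, scaled_orthogonal (T v))
  (i : V) :
  (T i = 0 ->
     forall X : V -> 'cV[R]_d, LinT e S T (Lout e S T X) i = 0) /\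
  (forall k : V, e i k -> S k = 0 ->
     forall X Y : V -> 'cV[R]_d, (forall j, j != k -> X j = Y j) ->
       LinT e S T (Lout e S T X) i = LinT e S T (Lout e S T Y) i).
Proof.
split=> [Ti0 X | k eik Sk0 X Y eqXY]; first exact: LinT_eq0.
have neq_ik : i != k by apply: contraTneq eik => ->; rewrite e_irr.
have eqLout := @Lout_eq_off_kernel _ _ e _ S T _ _ _ Sk0 eqXY.
apply: LinT_congr (eqLout i neq_ik).
exact: mulmx_eq_off_kernel Sk0 eqLout.
Qed.
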